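(* Let $q:V\to\overline K/\overline R$ be a non-trivial generalized $(\sigma,\varepsilon)$-quadratic form with sesquilinearization $f$, such that $V$ has a basis $E=(e_i)_{i\in I}$ of $q$-singular vectors ($I$ totally ordered). Let $\overline R=\overline S\oplus\overline T$ be a direct sum decomposition of the $K$-vector space $(\overline R,\circ)$. Put $V^{\overline S}=V\oplus\overline S$, $f^{\overline S}(x+\bar r,y+\bar s)=f(x,y)$ and $q_E^{\overline S,\overline T}(x+\bar r)=\overline{g_E(x,x)}+\bar r+\overline T$ for $x,y\in V$, $\bar r,\bar s\in\overline S$. Then $q_E^{\overline S,\overline T}:V^{\overline S}\to\overline K/\overline T$ is a non-trivial generalized $(\sigma,\varepsilon)$-quadratic form whose sesquilinearization is $f^{\overline S}$.
   Context: $K$ division ring, $(\sigma,\varepsilon)$ admissible pair ($\sigma$ anti-automorphism, $\varepsilon^\sigma\varepsilon=1$, $t^{\sigma^2}=\varepsilon t\varepsilon^{-1}$). $K_{\sigma,\varepsilon}=\{t-t^\sigma\varepsilon\}$, $K^{\sigma,\varepsilon}=\{t:t=-t^\sigma\varepsilon\}$, $\overline K=K/K_{\sigma,\varepsilon}$, $\bar t$ class of $t$, $\bar t\circ\lambda=\overline{\lambda^\sigma t\lambda}$; $K^{\sigma,\varepsilon}/K_{\sigma,\varepsilon}$ is a right $K$-vector space under $\circ$, and for non-trivial $q$ the co-defect $\overline R$ is a subspace of it. Closed subgroups: stable under all $\circ\lambda$; $(\bar t+\overline H)\circ\lambda=\bar t\circ\lambda+\overline H$. Generalized $(\sigma,\varepsilon)$-quadratic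 form with co-defect closed $\overline R$: $q:V\to\overline K/\overline R$ ($V$ right $K$-vector space) with $q(x\lambda)=q(x)\circ\lambda$ and trace-valued $(\sigma,\varepsilon)$-sesquilinear $f$ ($f(x\lambda,y\mu)=\lambda^\sigma f(x,y)\mu$, $f(y,x)=f(x,y)^\sigma\varepsilon$, $f(x,x)\in\{t+t^\sigma\varepsilon\}$) with $q(x+y)=q(x)+q(y)+(\overline{f(x,y)}+\overline R)$ (the sesquilinearization). $q$-singular: $q(x)=\overline R$. $g_E(\sum_i e_i\lambda_i,\sum_j e_j\mu_j)=\sum_{i<j}\lambda_i^\sigma f(e_i,e_j)\mu_j$. $V^{\overline S}$ is the direct sum of right $K$-vector spaces, $\overline S$ having scalar multiplication $\circ$. *)

From HB Require Import structures.
From mathcomp Require Import all_boot all_order all_algebra.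
From Stdlib Require Import ClassicalEpsilon.
Set Implicit Arguments. Unset Strict Implicit. Unset Printing Implicit Defensive.
Import Order.TTheory GRing.Theory.
Local Open Scope ring_scope.

Definition division_ring (K : unitRingType) : Prop :=
  forall x : K, x != 0 -> x \is a GRing.unit.

Definition admissible (K : unitRingType) (sigma : K -> K) (eps : K) : Prop :=
  [/\ (forall a b, sigma (a + b) = sigma a + sigma b),
      (forall a b, sigma (a * b) = sigma b * sigma a),
      sigma 1 = 1 /\ bijective sigma,
      sigma eps * eps = 1 &
      (forall t, sigma (sigma t) = eps * t * eps^-1)].

(* Kbar together with pi : K -> Kbar is the quotient K / K_{sigma,eps}, where
   K_{sigma,eps} = { t - t^sigma eps }; circ is the operation
   pi t o lambda = pi (lambda^sigma t lambda). *)
Definition quotient_data (K : unitRingType) (sigma : K -> K) (eps : K)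
  (Kbar : zmodType) (pi : K -> Kbar) (circ : Kbar -> K -> Kbar) : Prop :=
  [/\ (forall a b, pi (a + b) = pi a + pi b),
      (forall b : Kbar, exists t, pi t = b),
      (forall t, pi t = 0 <-> exists u, t = u - sigma u * eps) &
      (forall t l, circ (pi t) l = pi (sigma l * t * l))].

Definition right_vspace (K : unitRingType) (V : zmodType) (rsc : V -> K -> V)
  : Prop :=
  [/\ (forall x y l, rsc (x + y) l = rsc x l + rsc y l),
      (forall x l m, rsc x (l + m) = rsc x l + rsc x m),
      (forall x l m, rsc x (l * m) = rsc (rsc x l) m) &
      (forall x, rsc x 1 = x)].

Definition closed_subgroup (K : unitRingType) (Kbar : zmodType)
  (circ : Kbar -> K -> Kbar) (H : pred Kbar) : Prop :=
  [/\ 0 \in H,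
      (forall a b, a \in H -> b \in H -> a - b \in H) &
      (forall a l, a \in H -> circ a l \in H)].

Definition trace_valued_sesq (K : unitRingType) (sigma : K -> K) (eps : K)
  (W : zmodType) (D : pred W) (rsc : W -> K -> W) (F : W -> W -> K) : Prop :=
  [/\ (forall x x' y, D x -> D x' -> D y -> F (x + x') y = F x y + F x' y),
      (forall x y y', D x -> D y -> D y' -> F x (y + y') = F x y + F x y'),
      (forall x y l m, D x -> D y -> F (rsc x l) (rsc y m) = sigma l * F x y * m),
      (forall x y, D x -> D y -> F y x = sigma (F x y) * eps) &
      (forall x, D x -> exists t, F x x = t + sigma t * eps)].

(* Generalized (sigma,eps)-quadratic form Q : D -> Kbar / Rb (values given by
   representatives in Kbar, equalities read modulo Rb), with co-defect the
   closed subgroup Rb and sesquilinearization F. *)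
Definition gen_quad_form (K : unitRingType) (sigma : K -> K) (eps : K)
  (Kbar : zmodType) (pi : K -> Kbar) (circ : Kbar -> K -> Kbar)
  (W : zmodType) (D : pred W) (rsc : W -> K -> W)
  (Q : W -> Kbar) (F : W -> W -> K) (Rb : pred Kbar) : Prop :=
  [/\ closed_subgroup circ Rb,
      trace_valued_sesq sigma eps D rsc F,
      (forall x l, D x -> Q (rsc x l) - circ (Q x) l \in Rb) &
      (forall x y, D x -> D y -> Q (x + y) - (Q x + Q y + pi (F x y)) \in Rb)].

Definition nontrivial (Kbar : zmodType) (Rb : pred Kbar) : Prop :=
  exists b, b \notin Rb.

Definition lincomb (K : unitRingType) (V : zmodType) (rsc : V -> K -> V)
  (I : Type) (e : I -> V) (s : seq I) (c : I -> K) : V :=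
  \sum_(i <- s) rsc (e i) (c i).

Definition is_basis (K : unitRingType) (V : zmodType) (rsc : V -> K -> V)
  (I : eqType) (e : I -> V) : Prop :=
  (forall x, exists s c, x = lincomb rsc e s c) /\
  (forall s c, uniq s -> lincomb rsc e s c = 0 -> forall i, i \in s -> c i = 0).

Definition gE_rel (K : unitRingType) (sigma : K -> K) (V : zmodType)
  (rsc : V -> K -> V) (f : V -> V -> K) (d : Order.disp_t) (I : orderType d)
  (e : I -> V) (x y : V) (v : K) : Prop :=
  exists (s : seq I) (c c' : I -> K),
    [/\ uniq s, x = lincomb rsc e s c, y = lincomb rsc e s c' &
        v = \sum_(i <- s) \sum_(j <- s | (i < j)%O) sigma (c i) * f (e i) (e j) * c' j].

Definition gE (K : unitRingType) (sigma : K -> K) (V : zmodType)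
  (rsc : V -> K -> V) (f : V -> V -> K) (d : Order.disp_t) (I : orderType d)
  (e : I -> V) (x y : V) : K :=
  epsilon (inhabits 0) (gE_rel sigma rsc f e x y).

Definition direct_sum_decomp (K : unitRingType) (Kbar : zmodType)
  (circ : Kbar -> K -> Kbar) (Rb Sb Tb : pred Kbar) : Prop :=
  [/\ closed_subgroup circ Sb, closed_subgroup circ Tb,
      (forall b, b \in Sb -> b \in Tb -> b = 0) &
      (forall b, b \in Rb <-> exists s t, [/\ s \in Sb, t \in Tb & b = s + t])].

From HB Require Import structures.
From mathcomp Require Import all_boot all_order all_algebra.
From Stdlib Require Import ClassicalEpsilon.
Import Order.TTheory GRing.Theory.
Set Implicit Arguments. Unset Strict Implicit.
Local Open Scope ring_scope.

(* If q (e_i) lies in R and f (e_i, e_i) were nonzero, comparing q (e_i) with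
   q (e_i (1 + l)) would put every pi (f (e_i, e_i) l), i.e. all of Kbar, into R;
   so f is alternating on the basis.  Writing x = sum_i e_i c_i, the value
   g_E (x, x) = sum_(i<j) c_i^sigma f (e_i, e_j) c_j depends only on x, scales as
   l^sigma g_E (x, x) l, and satisfies
   g_E (x+y, x+y) - g_E (x, x) - g_E (y, y) = g_E (x, y) + g_E (y, x).
   Modulo K_{sigma,eps} the term g_E (y, x) is the strictly lower triangular part
   of f (x, y), because f (e_j, e_i) = f (e_i, e_j)^sigma eps, and the diagonal
   part vanishes; hence the sum is f (x, y).  So q_E^{S,T} satisfies both axioms
   exactly, a fortiori modulo T, and T is a proper subgroup since T <= R. *)

Lemma big_sub_support (R : Type) (idx : R) (op : Monoid.com_law idx)
    (T : eqType) (s u : seq T) (F : T -> R) :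
  uniq s -> uniq u -> {subset s <= u} -> (forall i, i \notin s -> F i = idx) ->
  \big[op/idx]_(i <- u) F i = \big[op/idx]_(i <- s) F i.
Proof.
move=> us uu su Fout.
rewrite (bigID (mem s)) /= [X in op _ X]big1 ?Monoid.mulm1; last by move=> i /Fout.
rewrite -big_filter; apply/perm_big/uniq_perm; rewrite ?filter_uniq // => i.
by rewrite mem_filter andb_idr //; apply: su.
Qed.

Lemma subset_undup_catl (T : eqType) (s s' : seq T) : {subset s <= undup (s ++ s')}.
Proof. by move=> i si; rewrite mem_undup mem_cat si. Qed.

Lemma subset_undup_catr (T : eqType) (s s' : seq T) : {subset s' <= undup (s ++ s')}.
Proof. by move=> i si; rewrite mem_undup mem_cat si orbT. Qed.

Section ClosedSubgroup.
Variables (K : unitRingType) (Kbar : zmodType) (circ : Kbar -> K -> Kbar) (H : pred Kbar).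
Hypothesis Hclosed : closed_subgroup circ H.

Lemma closed_subgroupN a : a \in H -> - a \in H.
Proof. by case: Hclosed => H0 HB _ Ha; rewrite -sub0r HB. Qed.

Lemma closed_subgroupD a b : a \in H -> b \in H -> a + b \in H.
Proof.
by case: Hclosed => _ HB _ Ha Hb; rewrite -[b]opprK HB ?closed_subgroupN.
Qed.

End ClosedSubgroup.

Section Forms.
Variables (K : unitRingType) (sigma : K -> K) (eps : K).
Variables (Kbar : zmodType) (pi : K -> Kbar) (circ : Kbar -> K -> Kbar).
Variables (V : zmodType) (rsc : V -> K -> V) (f : V -> V -> K).
Hypotheses (Kdiv : division_ring K) (adm : admissible sigma eps).
Hypotheses (quot : quotient_data sigma eps pi circ) (RV : right_vspace rsc).

Lemma sigma0 : sigma 0 = 0.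
Proof. by case: adm => sD _ _ _ _; apply: (addrI (sigma 0)); rewrite -sD !addr0. Qed.

Lemma eps_unit : eps \is a GRing.unit.
Proof.
case: adm => _ _ _ seps _; apply: Kdiv; apply: contra_eqN seps => /eqP ->.
by rewrite mulr0 eq_sym oner_eq0.
Qed.

Lemma piD a b : pi (a + b) = pi a + pi b.
Proof. by case: quot. Qed.

Lemma pi0 : pi 0 = 0.
Proof. by apply: (addrI (pi 0)); rewrite -piD !addr0. Qed.

Lemma piB a b : pi (a - b) = pi a - pi b.
Proof.
rewrite piD; congr (_ + _); apply: (addrI (pi b)).
by rewrite -piD !subrr pi0.
Qed.

Lemma pi_sum (T : Type) (s : seq T) (P : pred T) (F : T -> K) :
  pi (\sum_(i <- s | P i) F i) = \sum_(i <- s | P i) pi (F i).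
Proof. exact: (big_morph pi piD pi0). Qed.

Lemma pi_sigma_eps t : pi (sigma t * eps) = pi t.
Proof.
case: quot => _ _ piker _; apply/eqP; rewrite eq_sym -subr_eq0 -piB.
by apply/eqP/piker; exists t.
Qed.

Lemma circ_pi t l : circ (pi t) l = pi (sigma l * t * l).
Proof. by case: quot. Qed.

Lemma circDl a b l : circ (a + b) l = circ a l + circ b l.
Proof.
case: quot => _ pisurj _ _.
have [[t <-] [t' <-]] := (pisurj a, pisurj b).
by rewrite -piD !circ_pi -piD mulrDr mulrDl.
Qed.

Lemma rsc0 l : rsc 0 l = 0.
Proof. by case: RV => rD _ _ _; apply: (addrI (rsc 0 l)); rewrite -rD !addr0. Qed.

Lemma rscr0 x : rsc x 0 = 0.
Proof. by case: RV => _ rDr _ _; apply: (addrI (rsc x 0)); rewrite -rDr !addr0. Qed.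

Lemma rscrB x l m : rsc x (l - m) = rsc x l - rsc x m.
Proof.
case: RV => _ rDr _ _; rewrite rDr; congr (_ + _).
by apply: (addrI (rsc x m)); rewrite -rDr !subrr rscr0.
Qed.

Lemma rsc_suml (T : Type) (s : seq T) (F : T -> V) l :
  rsc (\sum_(i <- s) F i) l = \sum_(i <- s) rsc (F i) l.
Proof. by case: RV => rD _ _ _; apply: (big_morph _ (fun x y => rD x y l) (rsc0 l)). Qed.

Lemma rsc_sumr (T : Type) (s : seq T) (P : pred T) (F : T -> K) x :
  rsc x (\sum_(i <- s | P i) F i) = \sum_(i <- s | P i) rsc x (F i).
Proof. by case: RV => _ rDr _ _; apply: (big_morph _ (rDr x) (rscr0 x)). Qed.

Section Sesquilinear.
Hypothesis sesq : trace_valued_sesq sigma eps predT rsc f.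

Lemma sesqDl x x' y : f (x + x') y = f x y + f x' y.
Proof. by case: sesq => fDl _ _ _ _; apply: fDl. Qed.

Lemma sesqDr x y y' : f x (y + y') = f x y + f x y'.
Proof. by case: sesq => _ fDr _ _ _; apply: fDr. Qed.

Lemma sesq0l y : f 0 y = 0.
Proof. by apply: (addrI (f 0 y)); rewrite -sesqDl !addr0. Qed.

Lemma sesq0r x : f x 0 = 0.
Proof. by apply: (addrI (f x 0)); rewrite -sesqDr !addr0. Qed.

Lemma sesqZl x y l : f (rsc x l) y = sigma l * f x y.
Proof. by case: RV => _ _ _ r1; case: sesq => _ _ fZ _ _; rewrite -{1}[y]r1 fZ // mulr1. Qed.

Lemma sesqZr x y m : f x (rsc y m) = f x y * m.
Proof.
case: RV => _ _ _ r1; case: adm => _ _ [s1 _] _ _; case: sesq => _ _ fZ _ _.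
by rewrite -{1}[x]r1 fZ // s1 mul1r.
Qed.

Lemma sesq_sym x y : f y x = sigma (f x y) * eps.
Proof. by case: sesq => _ _ _ fH _; apply: fH. Qed.

Lemma sesq_lincomb (I : Type) (e : I -> V) (s : seq I) (a b : I -> K) :
  f (lincomb rsc e s a) (lincomb rsc e s b) =
  \sum_(i <- s) \sum_(j <- s) sigma (a i) * f (e i) (e j) * b j.
Proof.
rewrite /lincomb (big_morph (f^~ _) (fun x x' => sesqDl x x' _) (sesq0l _)).
apply: eq_bigr => i _; rewrite sesqZl (big_morph (f _) (sesqDr _) (sesq0r _)).
by rewrite mulr_sumr; apply: eq_bigr => j _; rewrite sesqZr mulrA.
Qed.

End Sesquilinear.

Lemma singular_isotropic (q : V -> Kbar) (Rb : pred Kbar) x :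
  gen_quad_form sigma eps pi circ predT rsc q f Rb -> nontrivial Rb ->
  q x \in Rb -> f x x = 0.
Proof.
move=> [Rclosed sesq qZ qD] [b bR] qxR; apply/eqP; apply: contraNT bR => fxx.
case: (Rclosed) => _ RB Rcirc; case: RV => _ rDr _ r1.
have qZR l : q (rsc x l) \in Rb.
  by rewrite -[q _](subrK (circ (q x) l)) (closed_subgroupD Rclosed) ?qZ ?Rcirc.
case: quot => _ pisurj _ _; have [k <-] := pisurj b.
set l := (f x x)^-1 * k.
have fxl : f x (rsc x l) = k by rewrite sesqZr // /l mulVKr // Kdiv.
have := qD x (rsc x l) isT isT; rewrite -{1}[x]r1 -rDr fxl => qDR.
set Q := q (rsc x (1 + l)); set A := q x; set B := q (rsc x l).
have -> : pi k = (A + B + pi k - Q) + (Q - (A + B)).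
  by rewrite subrKA addrAC subrr add0r.
apply: (closed_subgroupD Rclosed); first by rewrite -opprB (closed_subgroupN Rclosed).
by rewrite RB ?(closed_subgroupD Rclosed) ?qxR ?qZR.
Qed.

Section Lincomb.
Variables (I : eqType) (e : I -> V).
Local Notation lc := (lincomb rsc e).

Definition coef_on (s : seq I) (c : I -> K) i := if i \in s then c i else 0.

Lemma eq_lincomb s a b : {in s, a =1 b} -> lc s a = lc s b.
Proof. by move=> ab; apply: eq_big_seq => i /ab ->. Qed.

Lemma lincomb_coef_on s c : lc s (coef_on s c) = lc s c.
Proof. by apply: eq_lincomb => i si; rewrite /coef_on si. Qed.

Lemma lincombD s a b : lc s a + lc s b = lc s (fun i => a i + b i).
Proof.
by case: RV => _ rDr _ _; rewrite /lincomb -big_split; apply: eq_bigr => i _; rewrite rDr.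
Qed.

Lemma lincombB s a b : lc s a - lc s b = lc s (fun i => a i - b i).
Proof. by rewrite /lincomb -sumrB; apply: eq_bigr => i _; rewrite rscrB. Qed.

Lemma lincombZ s c l : rsc (lc s c) l = lc s (fun i => c i * l).
Proof. by case: RV => _ _ rM _; rewrite rsc_suml; apply: eq_bigr => i _; rewrite rM. Qed.

Lemma lincomb_undup s c :
  lc s c = lc (undup s) (fun i => \sum_(j <- s | i == j) c j).
Proof.
rewrite /lincomb; under [RHS]eq_bigr do rewrite rsc_sumr.
rewrite (exchange_big_dep xpredT) //=; apply: eq_big_seq => j js.
by rewrite -big_filter filter_pred1_uniq ?undup_uniq ?mem_undup // big_seq1.
Qed.

Lemma lincomb_widen s u c :
  uniq s -> uniq u -> {subset s <= u} -> (forall i, i \notin s -> c i = 0) ->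
  lc u c = lc s c.
Proof. by move=> us uu su c0; apply: big_sub_support => // i /c0 ->; rewrite rscr0. Qed.

Hypothesis basis : is_basis rsc e.

Lemma lincomb_inj s a b : uniq s -> lc s a = lc s b -> {in s, a =1 b}.
Proof.
case: basis => _ free us ab i si; apply/eqP; rewrite -subr_eq0; apply/eqP.
by apply: (free s (fun i => a i - b i) us _ i si); rewrite -lincombB ab subrr.
Qed.

Lemma lincomb_supported x :
  exists s c, [/\ uniq s, x = lc s c & forall i, i \notin s -> c i = 0].
Proof.
case: basis => span _; have [s [c ->]] := span x.
exists (undup s), (fun i => \sum_(j <- s | i == j) c j).
split; rewrite ?undup_uniq -?lincomb_undup // => i; rewrite mem_undup => si.
by apply: big1_seq => j /andP[/eqP ij js]; move: si; rewrite ij js.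
Qed.

Lemma lincomb_common_support x y :
  exists u a b, [/\ uniq u, x = lc u a & y = lc u b].
Proof.
have [s [a [us -> a0]]] := lincomb_supported x.
have [s' [b [us' -> b0]]] := lincomb_supported y.
have uu : uniq (undup (s ++ s')) := undup_uniq _.
exists (undup (s ++ s')), a, b.
by rewrite (lincomb_widen us uu (@subset_undup_catl _ s s') a0)
           (lincomb_widen us' uu (@subset_undup_catr _ s s') b0).
Qed.

Lemma lincomb_supported_inj s s' a b :
  uniq s -> uniq s' ->
  (forall i, i \notin s -> a i = 0) -> (forall i, i \notin s' -> b i = 0) ->
  lc s a = lc s' b -> a =1 b.
Proof.
move=> us us' a0 b0 ab i.
have uu : uniq (undup (s ++ s')) := undup_uniq _.
have [iu|] := boolP (i \in undup (s ++ s')).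
  apply: (lincomb_inj uu) iu.
  by rewrite (lincomb_widen us uu (@subset_undup_catl _ s s') a0)
             (lincomb_widen us' uu (@subset_undup_catr _ s s') b0).
by rewrite mem_undup mem_cat negb_or => /andP[/a0 -> /b0 ->].
Qed.

End Lincomb.

Section GramSum.
Variables (d : Order.disp_t) (I : orderType d) (e : I -> V).
Local Notation lc := (lincomb rsc e).

Definition gE_sum (s : seq I) (a b : I -> K) : K :=
  \sum_(i <- s) \sum_(j <- s | (i < j)%O) sigma (a i) * f (e i) (e j) * b j.

Lemma eq_gE_sum s a a' b b' :
  {in s, a =1 a'} -> {in s, b =1 b'} -> gE_sum s a b = gE_sum s a' b'.
Proof.
move=> aa' bb'; apply: eq_big_seq => i si.
by rewrite big_seq_cond [RHS]big_seq_cond; apply: eq_bigr => j /andP[sj _]; rewrite aa' ?bb'.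
Qed.

Lemma gE_sum_widen s u a b :
  uniq s -> uniq u -> {subset s <= u} ->
  (forall i, i \notin s -> a i = 0) -> (forall i, i \notin s -> b i = 0) ->
  gE_sum u a b = gE_sum s a b.
Proof.
move=> us uu su a0 b0; rewrite /gE_sum (big_sub_support _ us uu su); last first.
  by move=> i /a0 ->; rewrite sigma0; apply: big1 => j _; rewrite !mul0r.
apply: eq_bigr => i _; rewrite big_mkcond [RHS]big_mkcond (big_sub_support _ us uu su) //.
by move=> j /b0 ->; rewrite mulr0; case: ifP.
Qed.

Lemma gE_sumZ s c l :
  gE_sum s (fun i => c i * l) (fun i => c i * l) = sigma l * gE_sum s c c * l.
Proof.
case: adm => _ sM _ _ _; rewrite /gE_sum mulr_sumr mulr_suml; apply: eq_bigr => i _.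
by rewrite mulr_sumr mulr_suml; apply: eq_bigr => j _; rewrite sM !mulrA.
Qed.

Lemma gE_sumD s a b :
  gE_sum s (fun i => a i + b i) (fun i => a i + b i) =
  gE_sum s a a + gE_sum s b b + (gE_sum s a b + gE_sum s b a).
Proof.
case: adm => sD _ _ _ _; rewrite /gE_sum -!big_split; apply: eq_bigr => i _.
rewrite -!big_split; apply: eq_bigr => j _ /=; rewrite sD !mulrDl !mulrDr.
by rewrite [sigma (b i) * _ * a j + _]addrC addrACA.
Qed.

Section Basis.
Hypothesis basis : is_basis rsc e.

Lemma gE_rel_restrict x v : gE_rel sigma rsc f e x x v ->
  exists s c, [/\ uniq s, x = lc s c, forall i, i \notin s -> c i = 0 & v = gE_sum s c c].
Proof.
case=> s [c1 [c2 [us -> hx ->]]].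
have c12 := lincomb_inj basis us hx.
exists s, (coef_on s c1); split=> //; first by rewrite lincomb_coef_on.
  by move=> i /negbTE si; rewrite /coef_on si.
by apply: eq_gE_sum => i si; rewrite /coef_on si // c12.
Qed.

Lemma gE_rel_unique x v v' :
  gE_rel sigma rsc f e x x v -> gE_rel sigma rsc f e x x v' -> v = v'.
Proof.
move=> /gE_rel_restrict [s [a [us ex a0 ->]]] /gE_rel_restrict [s' [b [us' ex' b0 ->]]].
have ab := lincomb_supported_inj basis us us' a0 b0 (etrans (esym ex) ex').
have uu : uniq (undup (s ++ s')) := undup_uniq _.
rewrite -(gE_sum_widen us uu (@subset_undup_catl _ s s') a0 a0).
rewrite -(gE_sum_widen us' uu (@subset_undup_catr _ s s') b0 b0).
by apply: eq_gE_sum => i _; rewrite ab.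
Qed.

Lemma gE_lincomb s c : uniq s -> gE sigma rsc f e (lc s c) (lc s c) = gE_sum s c c.
Proof.
move=> us; have ex : exists v, gE_rel sigma rsc f e (lc s c) (lc s c) v.
  by exists (gE_sum s c c), s, c, c.
by apply: gE_rel_unique (epsilon_spec _ _ ex) _; exists s, c, c.
Qed.

End Basis.

Hypothesis sesq : trace_valued_sesq sigma eps predT rsc f.
Hypothesis alternating : forall i, f (e i) (e i) = 0.

Lemma pi_gE_sum_polar s a b :
  pi (gE_sum s a b) + pi (gE_sum s b a) = pi (f (lc s a) (lc s b)).
Proof.
case: adm => _ sM _ _ ss.
set F := fun i j => sigma (a i) * f (e i) (e j) * b j.
have lower : pi (gE_sum s b a) = pi (\sum_(i <- s) \sum_(j <- s | (j < i)%O) F i j).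
  rewrite (exchange_big_dep xpredT) //= !pi_sum; apply: eq_bigr => j _.
  rewrite !pi_sum; apply: eq_bigr => i _; rewrite -pi_sigma_eps /F.
  by rewrite !sM ss (sesq_sym sesq (e j) (e i)) !mulrA (mulrVK eps_unit).
have row i : \sum_(j <- s) F i j =
    \sum_(j <- s | (i < j)%O) F i j + \sum_(j <- s | (j < i)%O) F i j.
  rewrite (bigID (fun j => (i < j)%O)) /=; congr (_ + _).
  rewrite (bigID (fun j => (j < i)%O)) /= [X in _ + X]big1 ?addr0.
    by apply: eq_bigl => j; case: ltgtP.
  by move=> j; case: ltgtP => // <- _; rewrite /F alternating mulr0 mul0r.
rewrite lower sesq_lincomb // -piD; congr pi.
by rewrite /gE_sum -big_split; apply: eq_bigr => i _; symmetry; exact: row.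
Qed.

End GramSum.

End Forms.

Unset Implicit Arguments. Set Strict Implicit.

Theorem mainTheorem15 (K : unitRingType) (sigma : K -> K) (eps : K)
  (Kbar : zmodType) (pi : K -> Kbar) (circ : Kbar -> K -> Kbar)
  (V : zmodType) (rsc : V -> K -> V)
  (d : Order.disp_t) (I : orderType d) (e : I -> V)
  (q : V -> Kbar) (f : V -> V -> K) (Rb Sb Tb : pred Kbar) :
  division_ring K ->
  admissible sigma eps ->
  quotient_data sigma eps pi circ ->
  right_vspace rsc ->
  gen_quad_form sigma eps pi circ predT rsc q f Rb ->
  nontrivial Rb ->
  is_basis rsc e ->
  (forall i, q (e i) \in Rb) ->
  direct_sum_decomp circ Rb Sb Tb ->
  let DS := fun z : V * Kbar => z.2 \in Sb in
  let rscS := fun (z : V * Kbar) (l : K) => (rsc z.1 l, circ z.2 l) in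
  let fS := fun z w : V * Kbar => f z.1 w.1 in
  let qS := fun z : V * Kbar => pi (gE sigma rsc f e z.1 z.1) + z.2 in
  gen_quad_form sigma eps pi circ DS rscS qS fS Tb /\ nontrivial Tb.
Proof.
move=> Kdiv adm quot RV qform Rnontriv basis qe [Sclosed Tclosed _ Rdec] DS rscS fS qS.
have [_ sesq _ _] := qform.
have alternating i : f (e i) (e i) = 0.
  by apply: (singular_isotropic Kdiv adm quot RV qform Rnontriv); apply: qe.
have T0 : 0 \in Tb by case: Tclosed.
split; last first.
  case: Rnontriv => b bR; exists b; apply: contra bR => bT.
  by apply/Rdec; exists 0, b; rewrite add0r; case: Sclosed.
split=> //.
- by case: sesq => fDl fDr fZ fH fT; split=> *;
    [apply: fDl | apply: fDr | apply: fZ | apply: fH | apply: fT].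
- move=> [x r] l _; rewrite /qS /rscS /=.
  have [s [c [us -> _]]] := lincomb_supported RV basis x.
  rewrite lincombZ // !(gE_lincomb f adm RV basis) // (gE_sumZ _ adm).
  by rewrite -(circ_pi quot) (circDl quot) subrr.
- move=> [x r] [y r'] _ _; rewrite /qS /fS /=.
  have [u [a [b [uu -> ->]]]] := lincomb_common_support RV basis x y.
  rewrite lincombD // !(gE_lincomb f adm RV basis) // (gE_sumD _ adm) !(piD quot).
  rewrite -(pi_gE_sum_polar Kdiv adm quot RV sesq alternating).
  have -> (A B C s t : Kbar) : A + B + C + (s + t) - (A + s + (B + t) + C) = 0.
    by rewrite [A + B + C + _]addrAC [A + B + _]addrACA subrr.
  exact: T0.
Qed.
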